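(* Let $\phi:[0,1]\to\mathbb{C}$ be continuous with $\phi(0)=\phi(1)=1$ and $\hat\phi\in\ell^1(\mathbb{Z})$ (regarded as a function on $\mathbb{R}/\mathbb{Z}$). Let $m,\mathfrak{m}\in\mathbb{N}$, $N\ge\mathfrak{m}$, and define for $k\in\mathbb{Z}$ $$\mu(k)=\sum_{l\in k-B_N}\hat\phi(l),\qquad \nu(k)=\sum_{l\notin k-B_N}\hat\phi(l).$$ For $\mathfrak{m}$-Fourier bandlimited $f\in L^2([0,1];\mathbb{C}^m)$ define $$\mathcal{R}_\phi f(x)=\sum_{j=0}^{2N-1}f(j/2N)\,s_N(x-j/2N)\,\phi(x-j/2N),\qquad x\in[0,1],$$ with arguments taken modulo $1$. Then $$\hat f(k)-\widehat{\mathcal{R}_\phi f}(k)=\begin{cases}\hat f(k)\nu(k), & k\in B_{\mathfrak{m}},\\ -\hat f(k-2lN)\mu(k), & \text{if there is } l\ne0 \text{ with } k-2lN\in B_{\mathfrak{m}},\\ 0,&\text{otherwise}.\end{cases}$$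
   Context: $B_N=\{-N,\dots,N-1\}$ and $k-B_N=\{k-b:b\in B_N\}$. $\hat g(k)=\int_0^1 g(x)e^{-i2\pi kx}dx$. $f$ is $\mathfrak{m}$-Fourier bandlimited if $\hat f(k)=0$ for $k\notin B_{\mathfrak{m}}$ (identified with its continuous $1$-periodic representative). $s_N(x)=\frac1{2N}\sum_{k=-N}^{N-1}e^{i2\pi kx}$. *)

From Stdlib Require Import Reals List ZArith.
From Coquelicot Require Import Coquelicot.
Open Scope R_scope.

Definition cexp2pi (t : R) : C := (cos (2 * PI * t), sin (2 * PI * t)).

Definition zsum (lo : Z) (n : nat) (g : Z -> C) : C :=
  fold_right Cplus (RtoC 0) (map (fun i => g (lo + Z.of_nat i)%Z) (seq 0 n)).

Definition partZ (g : Z -> C) (n : nat) : C := zsum (- Z.of_nat n)%Z (2 * n + 1) g.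
Definition sumZ (g : Z -> C) : C :=
  (real (Lim_seq (fun n => fst (partZ g n))), real (Lim_seq (fun n => snd (partZ g n)))).

Definition ell1 (g : Z -> C) : Prop :=
  exists M : R, forall n : nat,
    fold_right Rplus 0 (map (fun i => Cmod (g (- Z.of_nat n + Z.of_nat i)%Z)) (seq 0 (2 * n + 1))) <= M.

Definition fhat (g : R -> C) (k : Z) : C :=
  @RInt C_R_CompleteNormedModule (fun x => Cmult (g x) (cexp2pi (- IZR k * x))) 0 1.

Definition inB (N : nat) (k : Z) : Prop := (- Z.of_nat N <= k < Z.of_nat N)%Z.

Definition sN (N : nat) (x : R) : C :=
  Cmult (RtoC (/ (2 * INR N))) (zsum (- Z.of_nat N)%Z (2 * N) (fun k => cexp2pi (IZR k * x))).

Definition per (phi : R -> C) (x : R) : C := phi (frac_part x).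

Definition Rphi (N : nat) (phi : R -> C) (f : R -> C) (x : R) : C :=
  zsum 0 (2 * N) (fun j =>
    let t := IZR j / (2 * INR N) in
    Cmult (Cmult (f t) (sN N (x - t))) (per phi (x - t))).

Definition mu (N : nat) (phi : R -> C) (k : Z) : C :=
  zsum (- Z.of_nat N)%Z (2 * N) (fun b => fhat phi (k - b)%Z).
Definition inBb (N : nat) (k : Z) : bool :=
  (Z.leb (- Z.of_nat N) k && Z.ltb k (Z.of_nat N))%bool.
Definition nu (N : nat) (phi : R -> C) (k : Z) : C :=
  sumZ (fun l => if inBb N (k - l)%Z then RtoC 0 else fhat phi l).

From Stdlib Require Import Reals List ZArith Lia Lra.
From Coquelicot Require Import Coquelicot.
Open Scope R_scope.

(* Write e(t) = exp(2 pi i t) and t_j = j/2N.  A continuous 1-periodic function is determined by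
   its Fourier coefficients (its Fejer means converge to it pointwise), so a bandlimited f is the
   trigonometric polynomial sum_(b in B_mm) \hat f(b) e(bt).  Every term of R_phi f is a translate
   of s_N phi, whence \hat{R_phi f}(k) = mu(k)/2N * sum_j f(t_j) e(-k t_j); summing roots of unity,
   the sampled sum is 2N times the sum of \hat f(b) over the b in B_mm congruent to k mod 2N, and
   since mm <= N the only candidate is b = k or b = k - 2lN.  Finally
   nu(k) = sum_l \hat phi(l) - mu(k), and sum_l \hat phi(l) = phi(0) = 1: the Cesaro means of the
   absolutely convergent symmetric partial sums are the Fejer means of phi at 0. *)

(** * Finite sums over integer ranges *)

Lemma zsum_0 lo g : zsum lo 0 g = RtoC 0.
Proof. reflexivity. Qed.

Lemma zsum_Sl lo n g : zsum lo (S n) g = (g lo + zsum (lo + 1) n g)%C.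
Proof.
  unfold zsum. cbn [seq map fold_right]. rewrite <- seq_shift, map_map, Z.add_0_r.
  do 2 f_equal. apply map_ext. intros i. f_equal. lia.
Qed.

Lemma zsum_ext lo n g h :
  (forall i, (lo <= i < lo + Z.of_nat n)%Z -> g i = h i) -> zsum lo n g = zsum lo n h.
Proof.
  revert lo. induction n as [|n IH]; intros lo H; [reflexivity|].
  rewrite !zsum_Sl, (H lo), (IH (lo + 1)%Z); [reflexivity| |lia].
  intros i Hi. apply H. lia.
Qed.

Lemma zsum_app lo n m g :
  zsum lo (n + m) g = (zsum lo n g + zsum (lo + Z.of_nat n) m g)%C.
Proof.
  revert lo. induction n as [|n IH]; intros lo.
  - rewrite Nat.add_0_l, Z.add_0_r, zsum_0. ring.
  - rewrite Nat.add_succ_l, !zsum_Sl, IH.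
    replace (lo + 1 + Z.of_nat n)%Z with (lo + Z.of_nat (S n))%Z by lia. ring.
Qed.

Lemma zsum_Sr lo n g : zsum lo (S n) g = (zsum lo n g + g (lo + Z.of_nat n)%Z)%C.
Proof. rewrite <- Nat.add_1_r, zsum_app, zsum_Sl, zsum_0. ring. Qed.

Lemma zsum_linear (F : C -> C) lo n g :
  F (RtoC 0) = RtoC 0 -> (forall a b, F (a + b)%C = (F a + F b)%C) ->
  F (zsum lo n g) = zsum lo n (fun i => F (g i)).
Proof.
  intros F0 Fadd. revert lo. induction n as [|n IH]; intros lo; [exact F0|].
  rewrite !zsum_Sl, Fadd, IH. reflexivity.
Qed.

Lemma zsum_mult_l lo n c g : zsum lo n (fun i => c * g i)%C = (c * zsum lo n g)%C.
Proof. symmetry. apply (zsum_linear (Cmult c)); intros; ring. Qed.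

Lemma zsum_mult_r lo n c g : zsum lo n (fun i => g i * c)%C = (zsum lo n g * c)%C.
Proof. symmetry. apply (zsum_linear (fun z => z * c)%C); intros; ring. Qed.

Lemma zsum_conj lo n g : Cconj (zsum lo n g) = zsum lo n (fun i => Cconj (g i)).
Proof.
  apply zsum_linear; [|apply Cplus_conj].
  apply injective_projections; simpl; ring.
Qed.

Lemma zsum_plus lo n g h :
  zsum lo n (fun i => g i + h i)%C = (zsum lo n g + zsum lo n h)%C.
Proof.
  revert lo. induction n as [|n IH]; intros lo.
  - rewrite !zsum_0. ring.
  - rewrite !zsum_Sl, IH. ring.
Qed.

Lemma zsum_minus lo n g h :
  zsum lo n (fun i => g i - h i)%C = (zsum lo n g - zsum lo n h)%C.
Proof.
  unfold Cminus. rewrite zsum_plus. f_equal.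
  symmetry. apply (zsum_linear Copp); intros; ring.
Qed.

Lemma zsum_const lo n c : zsum lo n (fun _ => c) = (INR n * c)%C.
Proof.
  revert lo. induction n as [|n IH]; intros lo.
  - rewrite zsum_0. simpl. ring.
  - rewrite zsum_Sl, IH, S_INR, RtoC_plus. ring.
Qed.

Lemma zsum_eq0 lo n (g : Z -> C) :
  (forall i, (lo <= i < lo + Z.of_nat n)%Z -> g i = RtoC 0) -> zsum lo n g = RtoC 0.
Proof.
  intros H. rewrite (zsum_ext _ _ _ (fun _ => RtoC 0) H), zsum_const. ring.
Qed.

Lemma zsum_shift lo n c g : zsum lo n (fun i => g (i + c)%Z) = zsum (lo + c) n g.
Proof.
  revert lo. induction n as [|n IH]; intros lo; [reflexivity|].
  rewrite !zsum_Sl, IH. replace (lo + 1 + c)%Z with (lo + c + 1)%Z by lia. reflexivity.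
Qed.

Lemma zsum_reflect lo n c g :
  zsum lo n (fun i => g (c - i)%Z) = zsum (c - lo - Z.of_nat n + 1) n g.
Proof.
  revert lo. induction n as [|n IH]; intros lo; [reflexivity|].
  rewrite zsum_Sl, zsum_Sr, IH.
  replace (c - (lo + 1) - Z.of_nat n + 1)%Z with (c - lo - Z.of_nat (S n) + 1)%Z by lia.
  replace (c - lo - Z.of_nat (S n) + 1 + Z.of_nat n)%Z with (c - lo)%Z by lia. ring.
Qed.

Lemma zsum_support lo n lo' n' (g : Z -> C) :
  (lo <= lo')%Z -> (lo' + Z.of_nat n' <= lo + Z.of_nat n)%Z ->
  (forall i, (lo <= i < lo + Z.of_nat n)%Z -> ~ (lo' <= i < lo' + Z.of_nat n')%Z -> g i = RtoC 0) ->
  zsum lo n g = zsum lo' n' g.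
Proof.
  intros Hlo Hhi H.
  set (a := Z.to_nat (lo' - lo)).
  replace n with (a + (n' + (n - a - n')))%nat by lia.
  rewrite !zsum_app, (zsum_eq0 lo a), (zsum_eq0 _ (n - a - n')).
  - replace (lo + Z.of_nat a)%Z with lo' by lia. ring.
  - intros i Hi. apply H; lia.
  - intros i Hi. apply H; lia.
Qed.

Lemma zsum_single lo n i0 (g : Z -> C) :
  (lo <= i0 < lo + Z.of_nat n)%Z ->
  (forall i, (lo <= i < lo + Z.of_nat n)%Z -> i <> i0 -> g i = RtoC 0) -> zsum lo n g = g i0.
Proof.
  intros Hi0 H. rewrite (zsum_support lo n i0 1); try lia.
  - rewrite zsum_Sl, zsum_0. ring.
  - intros i Hi Hne. apply H; lia.
Qed.

Lemma zsum_comm lo1 n1 lo2 n2 (F : Z -> Z -> C) :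
  zsum lo1 n1 (fun i => zsum lo2 n2 (F i)) = zsum lo2 n2 (fun j => zsum lo1 n1 (fun i => F i j)).
Proof.
  revert lo1. induction n1 as [|n1 IH]; intros lo1.
  - symmetry. apply zsum_eq0. reflexivity.
  - rewrite zsum_Sl, IH, <- zsum_plus. apply zsum_ext. intros j _. rewrite zsum_Sl. reflexivity.
Qed.

(** * The character e(t) *)

Lemma cexp2pi_add a b : cexp2pi (a + b) = (cexp2pi a * cexp2pi b)%C.
Proof.
  unfold cexp2pi, Cmult; simpl.
  rewrite Rmult_plus_distr_l, cos_plus, sin_plus. f_equal; ring.
Qed.

Lemma cexp2pi_0 : cexp2pi 0 = RtoC 1.
Proof. unfold cexp2pi. rewrite Rmult_0_r, cos_0, sin_0. reflexivity. Qed.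

Lemma cexp2pi_opp x : cexp2pi (- x) = Cconj (cexp2pi x).
Proof.
  unfold cexp2pi, Cconj; simpl.
  replace (2 * PI * - x) with (- (2 * PI * x)) by ring. rewrite cos_neg, sin_neg. reflexivity.
Qed.

Lemma cexp2pi_INR k : cexp2pi (INR k) = RtoC 1.
Proof.
  unfold cexp2pi. replace (2 * PI * INR k) with (0 + 2 * INR k * PI) by ring.
  rewrite cos_period, sin_period, cos_0, sin_0. reflexivity.
Qed.

Lemma cexp2pi_IZR z : cexp2pi (IZR z) = RtoC 1.
Proof.
  destruct (Z_le_gt_dec 0 z).
  - rewrite <- (Z2Nat.id z), <- INR_IZR_INZ by lia. apply cexp2pi_INR.
  - rewrite <- (Z.opp_involutive z), <- (Z2Nat.id (- z)), opp_IZR, <- INR_IZR_INZ by lia.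
    rewrite cexp2pi_opp, cexp2pi_INR. apply injective_projections; simpl; ring.
Qed.

Lemma cexp2pi_periodic x z : cexp2pi (x + IZR z) = cexp2pi x.
Proof. rewrite cexp2pi_add, cexp2pi_IZR. ring. Qed.

Lemma cexp2pi_eq1 x : cexp2pi x = RtoC 1 -> exists z, x = IZR z.
Proof.
  intros H. unfold cexp2pi in H. injection H as Hcos _.
  replace (2 * PI * x) with (2 * (PI * x)) in Hcos by ring. rewrite cos_2a_sin in Hcos.
  assert (Hsin : sin (PI * x) = 0) by nra.
  destruct (sin_eq_0_0 _ Hsin) as [z Hz]. exists z.
  pose proof PI_RGT_0. apply (Rmult_eq_reg_l PI); [|lra]. rewrite Hz. ring.
Qed.

Lemma geometric_cexp2pi n y :
  (zsum 0 n (fun j => cexp2pi (IZR j * y)) * (cexp2pi y - 1))%C = (cexp2pi (INR n * y) - 1)%C.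
Proof.
  induction n as [|n IH].
  - rewrite zsum_0. simpl. rewrite Rmult_0_l, cexp2pi_0. ring.
  - rewrite zsum_Sr, Z.add_0_l, <- INR_IZR_INZ, S_INR, Rmult_plus_distr_r, Rmult_1_l, cexp2pi_add.
    transitivity (zsum 0 n (fun j => cexp2pi (IZR j * y)) * (cexp2pi y - 1)
                  + cexp2pi (INR n * y) * (cexp2pi y - 1))%C; [ring|].
    rewrite IH. ring.
Qed.

Lemma sum_roots_of_unity (n : nat) (m : Z) : (0 < n)%nat ->
  zsum 0 n (fun j => cexp2pi (IZR m * (IZR j / INR n))) =
  if Z.eq_dec (m mod Z.of_nat n) 0 then RtoC (INR n) else RtoC 0.
Proof.
  intros Hn. assert (Hn' : 0 < INR n) by (apply lt_0_INR; lia).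
  set (y := IZR m / INR n).
  rewrite (zsum_ext _ _ _ (fun j => cexp2pi (IZR j * y)))
    by (intros; unfold y; f_equal; field; lra).
  destruct Z.eq_dec as [Hdiv|Hndiv].
  - apply Z.mod_divide in Hdiv; [|lia]. destruct Hdiv as [q Hq].
    rewrite (zsum_ext _ _ _ (fun _ => RtoC 1)), zsum_const; [apply Cmult_1_r|].
    intros j _. unfold y. rewrite Hq, mult_IZR, <- INR_IZR_INZ.
    replace (IZR j * (IZR q * INR n / INR n)) with (IZR (j * q)) by (rewrite mult_IZR; field; lra).
    apply cexp2pi_IZR.
  - assert (Hy : (cexp2pi y - 1)%C <> RtoC 0).
    { intros Hy. apply Hndiv.
      destruct (cexp2pi_eq1 y) as [z Hz].
      { replace (cexp2pi y) with (cexp2pi y - 1 + 1)%C by ring. rewrite Hy. ring. }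
      apply Z.mod_divide; [lia|]. exists z. apply eq_IZR.
      rewrite mult_IZR, <- INR_IZR_INZ, <- Hz. unfold y. field. lra. }
    pose proof (geometric_cexp2pi n y) as G.
    replace (INR n * y) with (IZR m) in G by (unfold y; field; lra).
    rewrite cexp2pi_IZR in G.
    apply (f_equal (fun w => w / (cexp2pi y - 1))%C) in G.
    replace ((1 - 1) / (cexp2pi y - 1))%C with (RtoC 0) in G by (field; exact Hy).
    rewrite <- G. field. exact Hy.
Qed.

(** * Complex-valued continuous functions and their integrals *)

Lemma ex_derive_continuous_R (f : R -> R) x : ex_derive f x -> continuous f x.
Proof. apply (@ex_derive_continuous R_AbsRing R_NormedModule). Qed.

Lemma continuous_Cpair (u v : R -> R) x :
  continuous u x -> continuous v x -> continuous (fun t => (u t, v t) : C) x.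
Proof.
  intros Hu Hv. apply filterlim_locally. intros eps.
  apply (filterlim_locally u) with (eps := eps) in Hu.
  apply (filterlim_locally v) with (eps := eps) in Hv.
  apply (filter_imp _ _ (fun t H => H) (filter_and _ _ Hu Hv)).
Qed.

Lemma continuous_Cplus (f g : R -> C) x :
  continuous f x -> continuous g x -> continuous (fun t => f t + g t)%C x.
Proof. apply (@continuous_plus _ _ C_R_NormedModule). Qed.

Lemma continuous_Cminus (f g : R -> C) x :
  continuous f x -> continuous g x -> continuous (fun t => f t - g t)%C x.
Proof. apply (@continuous_minus _ _ C_R_NormedModule). Qed.

Lemma continuous_fst_comp (f : R -> C) x : continuous f x -> continuous (fun t => fst (f t)) x.
Proof. intros Hf. apply (continuous_comp f fst); [exact Hf|]. destruct (f x). apply continuous_fst. Qed.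

Lemma continuous_snd_comp (f : R -> C) x : continuous f x -> continuous (fun t => snd (f t)) x.
Proof. intros Hf. apply (continuous_comp f snd); [exact Hf|]. destruct (f x). apply continuous_snd. Qed.

Lemma continuous_Cmult (f g : R -> C) x :
  continuous f x -> continuous g x -> continuous (fun t => f t * g t)%C x.
Proof.
  intros Hf Hg.
  apply continuous_fst_comp in Hf as Hf1. apply continuous_snd_comp in Hf as Hf2.
  apply continuous_fst_comp in Hg as Hg1. apply continuous_snd_comp in Hg as Hg2.
  apply continuous_Cpair.
  - apply (@continuous_minus _ _ R_NormedModule); apply (@continuous_mult _ R_AbsRing); assumption.
  - apply (@continuous_plus _ _ R_NormedModule); apply (@continuous_mult _ R_AbsRing); assumption.
Qed.

Lemma continuous_RtoC (r : R -> R) x : continuous r x -> continuous (fun t => RtoC (r t)) x.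
Proof. intros Hr. apply continuous_Cpair; [exact Hr|apply continuous_const]. Qed.

Lemma continuous_cexp2pi (m : R) x : continuous (fun t => cexp2pi (m * t)) x.
Proof. apply continuous_Cpair; apply ex_derive_continuous_R; auto_derive; exact I. Qed.

Lemma continuous_zsum lo n (g : Z -> R -> C) x :
  (forall i, continuous (g i) x) -> continuous (fun t => zsum lo n (fun i => g i t)) x.
Proof.
  intros Hg. revert lo. induction n as [|n IH]; intros lo; [apply continuous_const|].
  apply (continuous_ext (fun t => g lo t + zsum (lo + 1) n (fun i => g i t))%C).
  - intros t. symmetry. apply zsum_Sl.
  - apply continuous_Cplus; auto.
Qed.

Lemma continuous_comp_derivable {V : UniformSpace} (h : R -> R) (g : R -> V) x :
  ex_derive h x -> continuous g (h x) -> continuous (fun t => g (h t)) x.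
Proof. intros Hh. apply continuous_comp, ex_derive_continuous_R, Hh. Qed.

Notation CInt f a b := (@RInt C_R_CompleteNormedModule f a b).

Lemma CInt_ext (f g : R -> C) a b : (forall x, f x = g x) -> CInt f a b = CInt g a b.
Proof. intros H. apply RInt_ext. intros x _. apply H. Qed.

Lemma ex_CInt (f : R -> C) a b : (forall x, continuous f x) -> ex_RInt f a b.
Proof. intros Hf. apply (@ex_RInt_continuous C_R_CompleteNormedModule). auto. Qed.

Lemma CInt_plus (f g : R -> C) a b : (forall x, continuous f x) -> (forall x, continuous g x) ->
  CInt (fun t => f t + g t)%C a b = (CInt f a b + CInt g a b)%C.
Proof. intros Hf Hg. apply (@RInt_plus C_R_CompleteNormedModule); apply ex_CInt; auto. Qed.

Lemma CInt_minus (f g : R -> C) a b : (forall x, continuous f x) -> (forall x, continuous g x) ->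
  CInt (fun t => f t - g t)%C a b = (CInt f a b - CInt g a b)%C.
Proof. intros Hf Hg. apply (@RInt_minus C_R_CompleteNormedModule); apply ex_CInt; auto. Qed.

Lemma is_CInt_mult_l c (f : R -> C) a b I :
  is_RInt f a b I -> is_RInt (fun t => c * f t)%C a b (c * I)%C.
Proof.
  intros H.
  pose proof (is_RInt_fct_extend_fst f a b I H) as H1.
  pose proof (is_RInt_fct_extend_snd f a b I H) as H2.
  apply (@is_RInt_fct_extend_pair R_NormedModule R_NormedModule); simpl.
  - apply (@is_RInt_minus R_NormedModule
             (fun t => scal (fst c) (fst (f t))) (fun t => scal (snd c) (snd (f t))));
      apply (@is_RInt_scal R_NormedModule); assumption.
  - apply (@is_RInt_plus R_NormedModule
             (fun t => scal (fst c) (snd (f t))) (fun t => scal (snd c) (fst (f t))));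
      apply (@is_RInt_scal R_NormedModule); assumption.
Qed.

Lemma CInt_mult_l c (f : R -> C) a b : (forall x, continuous f x) ->
  CInt (fun t => c * f t)%C a b = (c * CInt f a b)%C.
Proof.
  intros Hf. apply (@is_RInt_unique C_R_CompleteNormedModule), is_CInt_mult_l.
  apply (@RInt_correct C_R_CompleteNormedModule), ex_CInt, Hf.
Qed.

Lemma CInt_const (c : C) a b : CInt (fun _ => c) a b = ((b - a) * c)%C.
Proof.
  rewrite (@RInt_const C_R_CompleteNormedModule).
  apply injective_projections; simpl; unfold scal; simpl; unfold mult; simpl; ring.
Qed.

Lemma CInt_zsum lo n (g : Z -> R -> C) a b : (forall i x, continuous (g i) x) ->
  CInt (fun t => zsum lo n (fun i => g i t)) a b = zsum lo n (fun i => CInt (g i) a b).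
Proof.
  intros Hg. revert lo. induction n as [|n IH]; intros lo.
  - transitivity (CInt (fun _ => RtoC 0) a b); [reflexivity|].
    rewrite CInt_const, zsum_0. apply Cmult_0_r.
  - rewrite zsum_Sl, <- IH, <- CInt_plus.
    + apply CInt_ext. intros t. apply zsum_Sl.
    + apply Hg.
    + intros x. apply continuous_zsum. intros i. apply Hg.
Qed.

Lemma CInt_shift (h : R -> C) c a b : (forall x, continuous h x) ->
  CInt (fun x => h (x + c)) a b = CInt h (a + c) (b + c).
Proof.
  intros Hh.
  replace (a + c) with (1 * a + c) by ring. replace (b + c) with (1 * b + c) by ring.
  rewrite <- (@RInt_comp_lin C_R_CompleteNormedModule) by (apply ex_CInt; exact Hh).
  apply RInt_ext. intros x _. rewrite Rmult_1_l.
  symmetry. apply (@scal_one R_Ring).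
Qed.

Lemma CInt_periodic (h : R -> C) a : (forall x, continuous h x) -> (forall x, h (x + 1) = h x) ->
  CInt h a (a + 1) = CInt h 0 1.
Proof.
  intros Hh Hper. assert (Hex : forall u v, ex_RInt h u v) by (intros; apply ex_CInt, Hh).
  rewrite <- (@RInt_Chasles C_R_CompleteNormedModule h a 0 (a + 1)), <- (@RInt_Chasles C_R_CompleteNormedModule h 0 1 (a + 1)) by auto.
  assert (Htail : CInt h 1 (a + 1) = CInt h 0 a).
  { transitivity (CInt (fun x => h (x + 1)) 0 a).
    - rewrite CInt_shift by exact Hh. f_equal. ring.
    - apply CInt_ext. exact Hper. }
  rewrite Htail, <- (@opp_RInt_swap C_R_CompleteNormedModule h 0 a) by auto.
  change (@eq C (- CInt h 0 a + (CInt h 0 1 + CInt h 0 a))%C (CInt h 0 1)). ring.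
Qed.

Lemma CInt_translate (h : R -> C) t : (forall x, continuous h x) -> (forall x, h (x + 1) = h x) ->
  CInt (fun x => h (x - t)) 0 1 = CInt h 0 1.
Proof.
  intros Hh Hper. rewrite <- (CInt_periodic h (- t)) by assumption.
  rewrite (CInt_ext _ (fun x => h (x + - t))) by reflexivity.
  rewrite CInt_shift by exact Hh. f_equal; ring.
Qed.

Lemma is_RInt_antiderivative (F f : R -> R) a b :
  (forall x, is_derive F x (f x)) -> (forall x, continuous f x) -> is_RInt f a b (F b - F a).
Proof. intros HF Hf. apply (@is_RInt_derive R_CompleteNormedModule); auto. Qed.

Lemma is_RInt_cexp2pi (m : Z) : m <> 0%Z ->
  is_RInt (fun x => cexp2pi (IZR m * x)) 0 1 (RtoC 0).
Proof.
  intros Hm. pose proof PI_RGT_0. assert (Hm' : IZR m <> 0) by (apply not_0_IZR; exact Hm).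
  set (w := 2 * PI * IZR m).
  assert (Hend : cexp2pi (IZR m * 1) = cexp2pi (IZR m * 0))
    by (rewrite Rmult_1_r, Rmult_0_r, cexp2pi_0; apply cexp2pi_IZR).
  unfold cexp2pi in Hend. injection Hend as Hcos Hsin.
  apply (@is_RInt_fct_extend_pair R_NormedModule R_NormedModule).
  - change (is_RInt (fun x => cos (2 * PI * (IZR m * x))) 0 1 (fst (RtoC 0))).
    replace (fst (RtoC 0)) with (sin (2 * PI * (IZR m * 1)) / w - sin (2 * PI * (IZR m * 0)) / w)
      by (rewrite Hsin; simpl; ring).
    apply (is_RInt_antiderivative (fun x => sin (2 * PI * (IZR m * x)) / w)).
    + intros x. auto_derive; [exact I|]. unfold w. field. lra.
    + intros x. apply ex_derive_continuous_R. auto_derive. exact I.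
  - change (is_RInt (fun x => sin (2 * PI * (IZR m * x))) 0 1 (snd (RtoC 0))).
    replace (snd (RtoC 0)) with (- cos (2 * PI * (IZR m * 1)) / w - - cos (2 * PI * (IZR m * 0)) / w)
      by (rewrite Hcos; simpl; ring).
    apply (is_RInt_antiderivative (fun x => - cos (2 * PI * (IZR m * x)) / w)).
    + intros x. auto_derive; [exact I|]. unfold w. field. lra.
    + intros x. apply ex_derive_continuous_R. auto_derive. exact I.
Qed.

Lemma CInt_cexp2pi (m : Z) :
  CInt (fun x => cexp2pi (IZR m * x)) 0 1 = if Z.eq_dec m 0 then RtoC 1 else RtoC 0.
Proof.
  destruct Z.eq_dec as [->|Hm].
  - rewrite (CInt_ext _ (fun _ => RtoC 1)), CInt_const.
    + apply injective_projections; simpl; ring.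
    + intros x. rewrite Rmult_0_l. apply cexp2pi_0.
  - apply (@is_RInt_unique C_R_CompleteNormedModule), is_RInt_cexp2pi, Hm.
Qed.

Lemma Cmod_CInt_le (f : R -> C) (g : R -> R) a b : a <= b ->
  (forall x, continuous f x) -> (forall x, continuous g x) ->
  (forall x, a <= x <= b -> Cmod (f x) <= g x) -> Cmod (CInt f a b) <= RInt g a b.
Proof.
  intros Hab Hf Hg Hfg. rewrite Cmod_norm.
  apply (@norm_RInt_le C_R_NormedModule f g a b); [exact Hab| |apply (@RInt_correct C_R_CompleteNormedModule), ex_CInt, Hf|].
  - intros x Hx. rewrite <- Cmod_norm. apply Hfg. exact Hx.
  - apply (@RInt_correct R_CompleteNormedModule), (@ex_RInt_continuous R_CompleteNormedModule).
    intros; apply Hg.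
Qed.

Lemma continuous_Cmod_lt (g : R -> C) x eps : continuous g x -> 0 < eps ->
  exists delta, 0 < delta /\ forall y, Rabs (y - x) < delta -> Cmod (g y - g x) < eps.
Proof.
  intros Hg Heps.
  destruct (proj1 (@filterlim_locally_ball_norm R_AbsRing R C_R_NormedModule _ _ g (g x)) Hg
              (mkposreal eps Heps)) as [delta Hdelta].
  exists delta. split; [apply cond_pos|]. intros y Hy. rewrite Cmod_norm. exact (Hdelta y Hy).
Qed.

Lemma continuous_Cmod_bounded (g : R -> C) a b : (forall x, continuous g x) ->
  exists M, forall x, a <= x <= b -> Cmod (g x) <= M.
Proof.
  intros Hg. destruct (@bounded_continuity R_AbsRing C_R_NormedModule g a b) as [M HM].
  - intros x _. apply Hg.
  - exists M. intros x Hx. rewrite Cmod_norm. apply Rlt_le, HM, Hx.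
Qed.

Lemma CInt_RtoC (r : R -> R) a b : (forall x, continuous r x) ->
  CInt (fun x => RtoC (r x)) a b = RtoC (RInt r a b).
Proof.
  intros Hr. apply (@is_RInt_unique C_R_CompleteNormedModule).
  apply (@is_RInt_fct_extend_pair R_NormedModule R_NormedModule); simpl.
  - apply (@RInt_correct R_CompleteNormedModule), (@ex_RInt_continuous R_CompleteNormedModule).
    intros; apply Hr.
  - pose proof (@is_RInt_const R_NormedModule a b 0) as H0.
    rewrite (@scal_zero_r R_AbsRing R_NormedModule) in H0. exact H0.
Qed.

(** * The Fejer kernel and uniqueness of Fourier coefficients *)

(* [fejer n] is the classical Fejer kernel sum_(|m|<n) (1 - |m|/n) e(mx). *)
Definition dirichlet (n : nat) (x : R) : C := zsum 0 n (fun j => cexp2pi (IZR j * x)).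
Definition fejer (n : nat) (x : R) : R := Cmod (dirichlet n x) ^ 2 / INR n.

Lemma fejer_expand n x :
  RtoC (fejer n x) = (RtoC (/ INR n) * zsum 0 n (fun j => zsum 0 n (fun k => cexp2pi (IZR (j - k) * x))))%C.
Proof.
  unfold fejer, Rdiv. rewrite RtoC_mult, Cmod2_conj, Cmult_comm. f_equal.
  unfold dirichlet. rewrite zsum_conj, <- zsum_mult_r. apply zsum_ext. intros j _.
  rewrite <- zsum_mult_l. apply zsum_ext. intros k _.
  rewrite <- cexp2pi_opp, <- cexp2pi_add, minus_IZR. f_equal. ring.
Qed.

Lemma fejer_ge0 n x : 0 <= fejer n x.
Proof.
  unfold fejer. apply Rmult_le_pos; [apply pow2_ge_0|].
  destruct n as [|n]; [simpl; rewrite Rinv_0; lra|].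
  apply Rlt_le, Rinv_0_lt_compat, lt_0_INR. lia.
Qed.

Lemma continuous_fejer n x : continuous (fejer n) x.
Proof.
  apply (continuous_ext (fun y => fst (RtoC (fejer n y)))); [reflexivity|].
  apply continuous_fst_comp.
  apply (continuous_ext _ _ _ (fun y => eq_sym (fejer_expand n y))).
  apply continuous_Cmult; [apply continuous_const|].
  apply continuous_zsum. intros j. apply continuous_zsum. intros k. apply continuous_cexp2pi.
Qed.

Lemma dirichlet_periodic n x z : dirichlet n (x + IZR z) = dirichlet n x.
Proof.
  apply zsum_ext. intros j _.
  rewrite Rmult_plus_distr_l, <- mult_IZR. apply cexp2pi_periodic.
Qed.

Lemma fejer_periodic n x z : fejer n (x + IZR z) = fejer n x.
Proof. unfold fejer. rewrite dirichlet_periodic. reflexivity. Qed.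

Lemma fejer_opp n x : fejer n (- x) = fejer n x.
Proof.
  unfold fejer, dirichlet. rewrite <- Cmod_conj, zsum_conj. do 3 f_equal.
  apply zsum_ext. intros j _. rewrite <- cexp2pi_opp. f_equal. ring.
Qed.

Lemma Cmod_cexp2pi_sub1 u : Cmod (cexp2pi u - 1) ^ 2 = 4 * sin (PI * u) ^ 2.
Proof.
  unfold Cmod. rewrite pow2_sqrt by (apply Rplus_le_le_0_compat; apply pow2_ge_0).
  unfold cexp2pi; simpl.
  replace (2 * PI * u) with (2 * (PI * u)) by ring. rewrite cos_2a_sin, sin_2a.
  pose proof (sin2_cos2 (PI * u)) as H. unfold Rsqr in H. nra.
Qed.

(* Summing the geometric series: |D_n(u)| |e(u) - 1| = |e(nu) - 1| <= 2. *)
Lemma fejer_le n u : (0 < n)%nat -> sin (PI * u) <> 0 ->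
  fejer n u <= / (INR n * sin (PI * u) ^ 2).
Proof.
  intros Hn Hs. assert (HnR : 0 < INR n) by (apply lt_0_INR; exact Hn).
  assert (Hs2 : 0 < sin (PI * u) ^ 2) by (apply pow2_gt_0; exact Hs).
  assert (Hgeom : Cmod (dirichlet n u) ^ 2 * (4 * sin (PI * u) ^ 2) = 4 * sin (PI * (INR n * u)) ^ 2).
  { rewrite <- !Cmod_cexp2pi_sub1, <- geometric_cexp2pi, Cmod_mult. unfold dirichlet. ring. }
  assert (Hle1 : Cmod (dirichlet n u) ^ 2 * sin (PI * u) ^ 2 <= 1).
  { pose proof (SIN_bound (PI * (INR n * u))). nra. }
  unfold fejer. rewrite Rinv_mult. unfold Rdiv. rewrite Rmult_comm.
  apply Rmult_le_compat_l; [apply Rlt_le, Rinv_0_lt_compat; exact HnR|].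
  apply (Rmult_le_reg_r (sin (PI * u) ^ 2)); [exact Hs2|].
  rewrite Rinv_l by lra. exact Hle1.
Qed.

Lemma RInt_fejer n a : (0 < n)%nat -> RInt (fejer n) a (a + 1) = 1.
Proof.
  intros Hn. assert (HnR : INR n <> 0) by (apply not_0_INR; lia).
  apply RtoC_inj. rewrite <- CInt_RtoC by apply continuous_fejer.
  rewrite CInt_periodic by
    first [intros x; apply continuous_RtoC, continuous_fejer
          |intros x; exact (f_equal RtoC (fejer_periodic n x 1))].
  rewrite (CInt_ext _ _ _ _ (fejer_expand n)), CInt_mult_l, CInt_zsum.
  - rewrite (zsum_ext _ _ _ (fun _ => RtoC 1)).
    + rewrite zsum_const, <- !RtoC_mult. f_equal. field. exact HnR.
    + intros j Hj. rewrite CInt_zsum by (intros; apply continuous_cexp2pi).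
      rewrite (zsum_single _ _ j); [| lia |].
      * rewrite Z.sub_diag, CInt_cexp2pi. reflexivity.
      * intros k _ Hkj. rewrite CInt_cexp2pi. destruct Z.eq_dec; [lia|reflexivity].
  - intros j x. apply continuous_zsum. intros k. apply continuous_cexp2pi.
  - intros x. apply continuous_zsum. intros j. apply continuous_zsum. intros k. apply continuous_cexp2pi.
Qed.

Lemma RInt_fejer_affine n a b c : (0 < n)%nat ->
  RInt (fun u => a * fejer n u + b) c (c + 1) = a + b.
Proof.
  intros Hn. apply (@is_RInt_unique R_CompleteNormedModule).
  replace (a + b) with (plus (scal a (RInt (fejer n) c (c + 1))) (scal (c + 1 - c) b))
    by (rewrite RInt_fejer by exact Hn; cbv [plus scal]; simpl; unfold mult; simpl; ring).
  apply (@is_RInt_plus R_NormedModule (fun u => scal a (fejer n u)) (fun _ => b)).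
  - apply (@is_RInt_scal R_NormedModule), (@RInt_correct R_CompleteNormedModule).
    apply (@ex_RInt_continuous R_CompleteNormedModule). intros; apply continuous_fejer.
  - apply (@is_RInt_const R_NormedModule).
Qed.

Definition fejer_mean (g : R -> C) (x : R) (n : nat) : C :=
  CInt (fun y => g y * RtoC (fejer n (x - y)))%C 0 1.

Lemma fejer_mean_expand (g : R -> C) x n : (forall y, continuous g y) ->
  fejer_mean g x n = (RtoC (/ INR n) * zsum 0 n (fun j => zsum 0 n (fun k =>
     cexp2pi (IZR (j - k) * x) * fhat g (j - k)%Z)))%C.
Proof.
  intros Hg. unfold fejer_mean, fhat.
  assert (Hterm : forall j k : Z, forall y, continuous
            (fun y => cexp2pi (IZR (j - k) * x) * (g y * cexp2pi (- IZR (j - k) * y)))%C y).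
  { intros j k y. apply continuous_Cmult; [apply continuous_const|].
    apply continuous_Cmult; [apply Hg|apply continuous_cexp2pi]. }
  rewrite (CInt_ext _ (fun y => RtoC (/ INR n) * zsum 0 n (fun j => zsum 0 n (fun k =>
             cexp2pi (IZR (j - k) * x) * (g y * cexp2pi (- IZR (j - k) * y)))))%C).
  - rewrite CInt_mult_l, CInt_zsum.
    + f_equal. apply zsum_ext. intros j _. rewrite CInt_zsum by (intros; apply Hterm).
      apply zsum_ext. intros k _. apply CInt_mult_l.
      intros y. apply continuous_Cmult; [apply Hg|apply continuous_cexp2pi].
    + intros j y. apply continuous_zsum. intros k. apply Hterm.
    + intros y. apply continuous_zsum. intros j. apply continuous_zsum. intros k. apply Hterm.
  - intros y. rewrite fejer_expand, Cmult_comm, <- Cmult_assoc, <- zsum_mult_r. f_equal.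
    apply zsum_ext. intros j _. rewrite <- zsum_mult_r. apply zsum_ext. intros k _.
    replace (IZR (j - k) * (x - y)) with (IZR (j - k) * x + - IZR (j - k) * y) by ring.
    rewrite cexp2pi_add. ring.
Qed.

Lemma fejer_mean_sub (g : R -> C) x n : (forall y, continuous g y) -> (forall y, g (y + 1) = g y) ->
  (0 < n)%nat ->
  (g x - fejer_mean g x n)%C = CInt (fun u => (g x - g (u + x)%R) * RtoC (fejer n u))%C (-1/2) (1/2).
Proof.
  intros Hg Hper Hn.
  set (h := fun y => (g y * RtoC (fejer n (x - y)))%C).
  assert (Hh : forall y, continuous h y).
  { intros y. apply continuous_Cmult; [apply Hg|apply continuous_RtoC].
    apply continuous_comp_derivable; [auto_derive; exact I|apply continuous_fejer]. }
  assert (Hmean : fejer_mean g x n = CInt (fun u => g (u + x)%R * RtoC (fejer n u))%C (-1/2) (1/2)).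
  { unfold fejer_mean. fold h. rewrite <- (CInt_periodic h (-1/2 + x)); [|exact Hh|].
    - replace (-1/2 + x + 1) with (1/2 + x) by field. rewrite <- CInt_shift by exact Hh.
      apply CInt_ext. intros u. unfold h. rewrite <- fejer_opp. do 3 f_equal. ring.
    - intros y. unfold h. rewrite Hper. replace (x - (y + 1)) with (x - y + IZR (-1)) by (simpl; ring).
      rewrite fejer_periodic. reflexivity. }
  assert (Hconst : g x = CInt (fun u => g x * RtoC (fejer n u))%C (-1/2) (1/2)).
  { rewrite CInt_mult_l by (intros; apply continuous_RtoC, continuous_fejer).
    rewrite CInt_RtoC by apply continuous_fejer.
    replace (1/2) with (-1/2 + 1) by field. rewrite RInt_fejer by exact Hn. symmetry. apply Cmult_1_r. }
  rewrite Hmean, Hconst at 1. rewrite <- CInt_minus.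
  - apply CInt_ext. intros u. ring.
  - intros u. apply continuous_Cmult; [apply continuous_const|apply continuous_RtoC, continuous_fejer].
  - intros u. apply continuous_Cmult; [|apply continuous_RtoC, continuous_fejer].
    apply continuous_comp_derivable; [auto_derive; exact I|apply Hg].
Qed.

Lemma sin_sq_le d u : 0 < d <= Rabs u -> Rabs u <= 1/2 -> sin (PI * d) ^ 2 <= sin (PI * u) ^ 2.
Proof.
  intros Hd Hu. pose proof PI_RGT_0.
  replace (sin (PI * u) ^ 2) with (sin (PI * Rabs u) ^ 2).
  - assert (0 <= sin (PI * d)) by (apply sin_ge_0; nra).
    assert (sin (PI * d) <= sin (PI * Rabs u)) by (apply sin_incr_1; nra).
    nra.
  - destruct (Rle_dec 0 u).
    + rewrite Rabs_pos_eq by lra. reflexivity.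
    + rewrite Rabs_left, Ropp_mult_distr_r_reverse, sin_neg by lra. ring.
Qed.

(* Split the Fejer integral at |u| = delta: near 0 use continuity, away from 0 the kernel is small. *)
Lemma fejer_mean_err_le (g : R -> C) x n eps delta M :
  (forall y, continuous g y) -> (forall y, g (y + 1) = g y) -> (0 < n)%nat ->
  0 < delta <= 1/2 -> 0 <= eps ->
  (forall u, Rabs u < delta -> Cmod (g x - g (u + x)%R) <= eps) ->
  (forall u, -1/2 <= u <= 1/2 -> Cmod (g x - g (u + x)%R) <= M) ->
  Cmod (g x - fejer_mean g x n) <= eps + M / (INR n * sin (PI * delta) ^ 2).
Proof.
  intros Hg Hper Hn Hdelta Heps Hnear Hfar.
  assert (HnR : 0 < INR n) by (apply lt_0_INR; exact Hn).
  assert (Hs : 0 < sin (PI * delta) ^ 2) by (apply pow2_gt_0, Rgt_not_eq, sin_gt_0; pose proof PI_RGT_0; nra).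
  assert (HM : 0 <= M) by (apply Rle_trans with (2 := Hfar 0 ltac:(lra)), Cmod_ge_0).
  set (K := M / (INR n * sin (PI * delta) ^ 2)).
  assert (HK : 0 <= K) by (apply Rdiv_le_0_compat; [exact HM|apply Rmult_lt_0_compat; assumption]).
  replace (eps + K) with (RInt (fun u => eps * fejer n u + K) (-1/2) (-1/2 + 1))
    by (apply RInt_fejer_affine, Hn).
  replace (-1/2 + 1) with (1/2) by field.
  rewrite fejer_mean_sub by assumption.
  apply Cmod_CInt_le; [lra| | |].
  - intros u. apply continuous_Cmult; [|apply continuous_RtoC, continuous_fejer].
    apply continuous_Cminus; [apply continuous_const|].
    apply continuous_comp_derivable; [auto_derive; exact I|apply Hg].
  - intros u. apply (@continuous_plus _ _ R_NormedModule); [|apply continuous_const].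
    apply (@continuous_scal _ _ R_NormedModule); [apply continuous_const|apply continuous_fejer].
  - intros u Hu. rewrite Cmod_mult, Cmod_R, Rabs_pos_eq by apply fejer_ge0.
    pose proof (fejer_ge0 n u).
    destruct (Rlt_dec (Rabs u) delta) as [Hlt|Hge].
    + pose proof (Hnear u Hlt). nra.
    + assert (Hsu : sin (PI * delta) ^ 2 <= sin (PI * u) ^ 2)
        by (apply sin_sq_le; [lra|apply Rabs_le; lra]).
      assert (Hfej : fejer n u <= / (INR n * sin (PI * delta) ^ 2)).
      { eapply Rle_trans; [apply fejer_le; [exact Hn|intros H0; rewrite H0 in Hsu; simpl in Hsu; lra]|].
        apply Rinv_le_contravar; [apply Rmult_lt_0_compat; assumption|].
        apply Rmult_le_compat_l; lra. }
      assert (Cmod (g x - g (u + x)%R) * fejer n u <= K).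
      { apply Rmult_le_compat; [apply Cmod_ge_0|assumption|apply Hfar, Hu|exact Hfej]. }
      nra.
Qed.

Lemma fejer_mean_cvg (g : R -> C) x : (forall y, continuous g y) -> (forall y, g (y + 1) = g y) ->
  forall eps, 0 < eps -> exists N0, forall n, (N0 <= n)%nat -> (0 < n)%nat ->
    Cmod (g x - fejer_mean g x n) <= eps.
Proof.
  intros Hg Hper eps Heps.
  destruct (continuous_Cmod_lt g x (eps / 2) (Hg x)) as [d [Hd0 Hd]]; [lra|].
  set (delta := Rmin d (1/2)).
  assert (Hdelta : 0 < delta <= 1/2) by (split; [apply Rmin_pos; lra|apply Rmin_r]).
  assert (Hs : 0 < sin (PI * delta) ^ 2)
    by (apply pow2_gt_0, Rgt_not_eq, sin_gt_0; pose proof PI_RGT_0; nra).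
  destruct (continuous_Cmod_bounded (fun u => g x - g (u + x)%R)%C (-1/2) (1/2)) as [M HM].
  { intros u. apply continuous_Cminus; [apply continuous_const|].
    apply continuous_comp_derivable; [auto_derive; exact I|apply Hg]. }
  destruct (INR_unbounded (2 * M / (eps * sin (PI * delta) ^ 2))) as [N0 HN0].
  exists N0. intros n HnN0 Hn.
  assert (HnR : INR N0 <= INR n) by (apply le_INR, HnN0).
  assert (Hnpos : 0 < INR n) by (apply lt_0_INR, Hn).
  apply Rle_trans with (eps / 2 + M / (INR n * sin (PI * delta) ^ 2)).
  - apply (fejer_mean_err_le g x n (eps / 2) delta M); try assumption; [lra|].
    intros u Hu. rewrite <- Cmod_opp.
    replace (- (g x - g (u + x)%R))%C with (g (u + x)%R - g x)%C by ring.
    apply Rlt_le, Hd. replace (u + x - x) with u by ring.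
    apply Rlt_le_trans with delta; [exact Hu|apply Rmin_l].
  - set (s := sin (PI * delta) ^ 2) in *.
    assert (H2M : 2 * M < INR n * (eps * s)).
    { assert (HN : 2 * M / (eps * s) < INR n) by lra.
      apply Rmult_lt_compat_r with (r := eps * s) in HN; [|nra].
      replace (2 * M / (eps * s) * (eps * s)) with (2 * M) in HN by (field; split; lra). exact HN. }
    assert (Hprod : 0 < INR n * s) by nra.
    assert (M / (INR n * s) <= eps / 2); [|lra].
    unfold Rdiv. apply (Rmult_le_reg_r (INR n * s)); [exact Hprod|].
    rewrite Rmult_assoc, Rinv_l by lra. nra.
Qed.

Lemma fourier_coeff_inj (g1 g2 : R -> C) :
  (forall y, continuous g1 y) -> (forall y, g1 (y + 1) = g1 y) ->
  (forall y, continuous g2 y) -> (forall y, g2 (y + 1) = g2 y) ->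
  (forall k, fhat g1 k = fhat g2 k) -> forall x, g1 x = g2 x.
Proof.
  intros Hc1 Hp1 Hc2 Hp2 Hk x.
  assert (Hmean : forall n, fejer_mean g1 x n = fejer_mean g2 x n).
  { intros n. rewrite !fejer_mean_expand by assumption.
    f_equal. apply zsum_ext. intros j _. apply zsum_ext. intros k _. rewrite Hk. reflexivity. }
  assert (Hd : Cmod (g1 x - g2 x) <= 0).
  { apply le_epsilon. intros eps Heps.
    destruct (fejer_mean_cvg g1 x Hc1 Hp1 (eps / 2)) as [N1 H1]; [lra|].
    destruct (fejer_mean_cvg g2 x Hc2 Hp2 (eps / 2)) as [N2 H2]; [lra|].
    set (n := S (N1 + N2)).
    specialize (H1 n ltac:(lia) ltac:(lia)). specialize (H2 n ltac:(lia) ltac:(lia)).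
    rewrite <- Hmean in H2.
    replace (g1 x - g2 x)%C with ((g1 x - fejer_mean g1 x n) - (g2 x - fejer_mean g1 x n))%C by ring.
    unfold Cminus at 1. eapply Rle_trans; [apply Cmod_triangle|]. rewrite Cmod_opp. lra. }
  apply Ceq_minus, Cmod_eq_0. apply Rle_antisym; [exact Hd|apply Cmod_ge_0].
Qed.

(** * Symmetric series over Z *)

Definition has_sumZ (g : Z -> C) (L : C) : Prop :=
  is_lim_seq (fun n => fst (partZ g n)) (fst L) /\ is_lim_seq (fun n => snd (partZ g n)) (snd L).

Lemma sumZ_unique g L : has_sumZ g L -> sumZ g = L.
Proof.
  intros [H1 H2]. unfold sumZ. rewrite (is_lim_seq_unique _ _ H1), (is_lim_seq_unique _ _ H2).
  destruct L. reflexivity.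
Qed.

Lemma partZ_S g n : partZ g (S n) = (g (- Z.of_nat (S n))%Z + partZ g n + g (Z.of_nat (S n)))%C.
Proof.
  unfold partZ. replace (2 * S n + 1)%nat with (S (S (2 * n + 1))) by lia.
  rewrite zsum_Sl, zsum_Sr.
  replace (- Z.of_nat (S n) + 1)%Z with (- Z.of_nat n)%Z by lia.
  replace (- Z.of_nat n + Z.of_nat (2 * n + 1))%Z with (Z.of_nat (S n)) by lia. ring.
Qed.

(* The Cesaro means of the symmetric partial sums are the Fejer double sums. *)
Lemma zsum_diag (a : Z -> C) n :
  zsum 0 n (fun j => zsum 0 n (fun k => a (j - k)%Z)) = zsum 0 n (fun p => partZ a (Z.to_nat p)).
Proof.
  induction n as [|n IH]; [reflexivity|].
  rewrite zsum_Sr, (zsum_Sr 0 n (fun p => partZ a (Z.to_nat p))), <- IH, Z.add_0_l, Nat2Z.id.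
  rewrite (zsum_ext 0 n _ (fun j => zsum 0 n (fun k => a (j - k)%Z) + a (j - Z.of_nat n)%Z)%C)
    by (intros j _; apply zsum_Sr).
  rewrite zsum_plus.
  unfold partZ. replace (2 * n + 1)%nat with (n + S n)%nat by lia. rewrite zsum_app.
  replace (- Z.of_nat n + Z.of_nat n)%Z with 0%Z by lia.
  replace (zsum (- Z.of_nat n) n a) with (zsum 0 n (fun j => a (j - Z.of_nat n)%Z))
    by (rewrite <- (Z.add_0_l (- Z.of_nat n)), <- zsum_shift; apply zsum_ext; intros; f_equal; lia).
  replace (zsum 0 (S n) a) with (zsum 0 (S n) (fun k => a (Z.of_nat n - k)%Z))
    by (rewrite zsum_reflect; f_equal; lia).
  ring.
Qed.

Lemma Un_cv_of_dominated_increments (u T : nat -> R) M :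
  (forall n m, (n <= m)%nat -> Rabs (u m - u n) <= T m - T n) -> (forall n, T n <= M) ->
  exists l, Un_cv u l.
Proof.
  intros Hinc HM.
  assert (Hmono : forall n m, (n <= m)%nat -> T n <= T m)
    by (intros n m Hnm; pose proof (Hinc n m Hnm); pose proof (Rabs_pos (u m - u n)); lra).
  assert (HT : Cauchy_crit T).
  { apply CV_Cauchy, growing_cv.
    - intros n. apply Hmono. lia.
    - exists M. intros x [n ->]. apply HM. }
  destruct (Rcomplete.R_complete u) as [l Hl]; [|exists l; exact Hl].
  intros eps Heps. destruct (HT eps Heps) as [N HN]. exists N. intros n m Hn Hm.
  unfold Rdist in *. destruct (Nat.le_ge_cases n m) as [Hnm|Hmn].
  - rewrite Rabs_minus_sym. eapply Rle_lt_trans; [apply Hinc, Hnm|].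
    specialize (HN m n Hm Hn). pose proof (Hmono n m Hnm). rewrite Rabs_pos_eq in HN; lra.
  - eapply Rle_lt_trans; [apply Hinc, Hmn|].
    specialize (HN n m Hn Hm). pose proof (Hmono m n Hmn). rewrite Rabs_pos_eq in HN; lra.
Qed.

Definition abs_partZ (g : Z -> C) (n : nat) : R := fst (partZ (fun l => RtoC (Cmod (g l))) n).

Lemma abs_partZ_bounded g : ell1 g -> exists M, forall n, abs_partZ g n <= M.
Proof.
  intros [M HM]. exists M. intros n. eapply Rle_trans; [|apply (HM n)].
  unfold abs_partZ, partZ, zsum. generalize (seq 0 (2 * n + 1)).
  induction l as [|i l IH]; simpl; [lra|apply Rplus_le_compat_l, IH].
Qed.

Lemma abs_partZ_S g n :
  abs_partZ g (S n) = Cmod (g (- Z.of_nat (S n))%Z) + abs_partZ g n + Cmod (g (Z.of_nat (S n))).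
Proof. unfold abs_partZ. rewrite partZ_S. reflexivity. Qed.

Lemma Cmod_partZ_sub_le g n m : (n <= m)%nat ->
  Cmod (partZ g m - partZ g n) <= abs_partZ g m - abs_partZ g n.
Proof.
  induction 1 as [|m Hnm IH].
  - unfold Cminus. rewrite Cplus_opp_r, Cmod_0. lra.
  - rewrite abs_partZ_S, partZ_S.
    replace (g (- Z.of_nat (S m))%Z + partZ g m + g (Z.of_nat (S m)) - partZ g n)%C
      with ((partZ g m - partZ g n) + g (- Z.of_nat (S m))%Z + g (Z.of_nat (S m)))%C by ring.
    eapply Rle_trans; [apply Cmod_triangle|]. eapply Rle_trans; [apply Rplus_le_compat_r, Cmod_triangle|].
    lra.
Qed.

(* Convergence arguments are made through real-linear projections dominated by [Cmod] (the real
   and imaginary parts), where Cesaro's lemma and the completeness of R apply. *)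
Section RealLinearFunctional.

Variable pr : C -> R.
Hypothesis pr_plus : forall a b, pr (a + b)%C = pr a + pr b.
Hypothesis pr_scal : forall (r : R) z, pr (RtoC r * z)%C = r * pr z.
Hypothesis pr_le_Cmod : forall z, Rabs (pr z) <= Cmod z.

Lemma pr_minus a b : pr (a - b)%C = pr a - pr b.
Proof.
  replace (a - b)%C with (a + RtoC (-1) * b)%C by (apply injective_projections; simpl; ring).
  rewrite pr_plus, pr_scal. ring.
Qed.

Lemma pr_zsum_nat (G : nat -> C) m :
  pr (zsum 0 (S m) (fun p => G (Z.to_nat p))) = sum_f_R0 (fun p => pr (G p)) m.
Proof.
  induction m as [|m IH].
  - simpl sum_f_R0. f_equal. rewrite zsum_Sl, zsum_0. apply Cplus_0_r.
  - rewrite zsum_Sr, pr_plus, IH, Z.add_0_l, Nat2Z.id. reflexivity.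
Qed.

Lemma pr_partZ_cv g : ell1 g -> exists l, Un_cv (fun n => pr (partZ g n)) l.
Proof.
  intros Hg. destruct (abs_partZ_bounded g Hg) as [M HM].
  apply (Un_cv_of_dominated_increments _ (abs_partZ g) M); [|exact HM].
  intros n m Hnm. rewrite <- pr_minus.
  eapply Rle_trans; [apply pr_le_Cmod|apply Cmod_partZ_sub_le, Hnm].
Qed.

Lemma pr_fourier_sum_at_0 (g : R -> C) l : (forall y, continuous g y) -> (forall y, g (y + 1) = g y) ->
  Un_cv (fun n => pr (partZ (fhat g) n)) l -> l = pr (g 0).
Proof.
  intros Hc Hper Hl.
  apply (UL_sequence (fun n => sum_f_R0 (fun p => pr (partZ (fhat g) p)) (pred n) / INR n));
    [apply Cesaro_1, Hl|].
  intros eps Heps. destruct (fejer_mean_cvg g 0 Hc Hper (eps / 2)) as [N0 HN0]; [lra|].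
  exists (S N0). intros [|m] Hm; [lia|]. simpl pred.
  assert (Hmean : fejer_mean g 0 (S m) =
                  (RtoC (/ INR (S m)) * zsum 0 (S m) (fun p => partZ (fhat g) (Z.to_nat p)))%C).
  { rewrite fejer_mean_expand, <- zsum_diag by exact Hc. f_equal.
    apply zsum_ext. intros j _. apply zsum_ext. intros k _. rewrite Rmult_0_r, cexp2pi_0. ring. }
  replace (sum_f_R0 (fun p => pr (partZ (fhat g) p)) m / INR (S m)) with (pr (fejer_mean g 0 (S m)))
    by (rewrite Hmean, pr_scal, pr_zsum_nat; unfold Rdiv; ring).
  unfold Rdist. rewrite <- pr_minus.
  eapply Rle_lt_trans; [apply pr_le_Cmod|]. rewrite <- Cmod_opp.
  replace (- (fejer_mean g 0 (S m) - g 0))%C with (g 0 - fejer_mean g 0 (S m))%C by ring.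
  eapply Rle_lt_trans; [apply HN0; lia|lra].
Qed.

End RealLinearFunctional.

Lemma Rabs_fst_le_Cmod z : Rabs (fst z) <= Cmod z.
Proof. eapply Rle_trans; [apply Rmax_l|apply Rmax_Cmod]. Qed.

Lemma Rabs_snd_le_Cmod z : Rabs (snd z) <= Cmod z.
Proof. eapply Rle_trans; [apply Rmax_r|apply Rmax_Cmod]. Qed.

Lemma fst_scal (r : R) z : fst (RtoC r * z)%C = r * fst z.
Proof. simpl. ring. Qed.

Lemma snd_scal (r : R) z : snd (RtoC r * z)%C = r * snd z.
Proof. simpl. ring. Qed.

Lemma ell1_has_sumZ g : ell1 g -> exists L, has_sumZ g L.
Proof.
  intros Hg.
  destruct (pr_partZ_cv fst (fun _ _ => eq_refl) fst_scal Rabs_fst_le_Cmod g Hg) as [l1 H1].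
  destruct (pr_partZ_cv snd (fun _ _ => eq_refl) snd_scal Rabs_snd_le_Cmod g Hg) as [l2 H2].
  exists (l1, l2). split; apply is_lim_seq_Reals; assumption.
Qed.

Lemma fourier_sum_at_0 (g : R -> C) L : (forall y, continuous g y) -> (forall y, g (y + 1) = g y) ->
  has_sumZ (fhat g) L -> L = g 0.
Proof.
  intros Hc Hper [H1 H2]. apply is_lim_seq_Reals in H1, H2.
  apply injective_projections.
  - exact (pr_fourier_sum_at_0 fst (fun _ _ => eq_refl) fst_scal Rabs_fst_le_Cmod g _ Hc Hper H1).
  - exact (pr_fourier_sum_at_0 snd (fun _ _ => eq_refl) snd_scal Rabs_snd_le_Cmod g _ Hc Hper H2).
Qed.

(** * The window function phi *)

Lemma frac_part_eq y z : IZR z <= y < IZR z + 1 -> frac_part y = y - IZR z.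
Proof. intros Hy. symmetry. apply (Int_part_frac_part_spec y z); [lra|ring]. Qed.

Lemma per_periodic (phi : R -> C) y : per phi (y + 1) = per phi y.
Proof.
  unfold per. destruct (base_Int_part y) as [H1 H2].
  rewrite (frac_part_eq (y + 1) (Int_part y + 1)), (frac_part_eq y (Int_part y)), plus_IZR
    by (rewrite ?plus_IZR; lra).
  f_equal. ring.
Qed.

Lemma fhat_per (phi : R -> C) k : fhat (per phi) k = fhat phi k.
Proof.
  unfold fhat. apply (@RInt_ext C_R_CompleteNormedModule). intros x Hx. rewrite Rmin_left, Rmax_right in Hx by lra.
  unfold per. rewrite (frac_part_eq x 0) by (simpl; lra). f_equal. f_equal. ring.
Qed.

Lemma continuous_per (phi : R -> C) :
  (forall x, 0 <= x <= 1 -> filterlim phi (within (fun y => 0 <= y <= 1) (locally x)) (locally (phi x))) ->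
  phi 0 = phi 1 -> forall x, continuous (per phi) x.
Proof.
  intros Hc H01 x.
  set (z := Int_part x). destruct (base_Int_part x) as [Hz1 Hz2]. fold z in Hz1, Hz2.
  assert (Htr : forall c, 0 <= x - c <= 1 -> forall eps : posreal,
             locally x (fun y => 0 <= y - c <= 1 -> ball (phi (x - c)) eps (phi (y - c)))).
  { intros c Hxc eps.
    refine (ex_derive_continuous_R (fun y => y - c) x _
              (fun w => 0 <= w <= 1 -> ball (phi (x - c)) eps (phi w)) _); [auto_derive; exact I|].
    exact (Hc (x - c) Hxc _ (locally_ball (phi (x - c)) eps)). }
  apply filterlim_locally. intros eps. unfold per.
  rewrite (frac_part_eq x z) by lra.
  destruct (Req_dec x (IZR z)) as [Hx|Hx].
  - assert (Hnear : locally x (fun y => IZR z - 1 < y < IZR z + 1))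
      by (apply (locally_interval _ x (IZR z - 1) (IZR z + 1)); simpl; intros; lra).
    assert (Hright := Htr (IZR z) ltac:(lra) eps).
    assert (Hleft := Htr (IZR z - 1) ltac:(lra) eps).
    generalize (filter_and _ _ Hnear (filter_and _ _ Hright Hleft)).
    apply filter_imp. clear Hright Hleft. intros y [Hy [Hright Hleft]].
    destruct (Rle_dec x y).
    + rewrite (frac_part_eq y z) by lra. apply Hright. lra.
    + rewrite (frac_part_eq y (z - 1)) by (rewrite minus_IZR; lra). rewrite minus_IZR.
      replace (x - IZR z) with 0 by lra. rewrite H01.
      replace (phi 1) with (phi (x - (IZR z - 1))) by (f_equal; lra). apply Hleft. lra.
  - assert (Hnear : locally x (fun y => IZR z < y < IZR z + 1))
      by (apply (locally_interval _ x (IZR z) (IZR z + 1)); simpl; intros; lra).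
    assert (Hball := Htr (IZR z) ltac:(lra) eps).
    generalize (filter_and _ _ Hnear Hball).
    apply filter_imp. clear Hball. intros y [Hy Hball].
    rewrite (frac_part_eq y z) by lra. apply Hball. lra.
Qed.

Lemma has_sumZ_ext g h L : (forall l, g l = h l) -> has_sumZ g L -> has_sumZ h L.
Proof.
  intros Hgh [H1 H2].
  assert (E : forall n, partZ g n = partZ h n) by (intros n; apply zsum_ext; auto).
  split; [revert H1|revert H2]; apply is_lim_seq_ext; intros n; rewrite E; reflexivity.
Qed.

Lemma has_sumZ_fhat_phi (phi : R -> C) :
  (forall x, 0 <= x <= 1 -> filterlim phi (within (fun y => 0 <= y <= 1) (locally x)) (locally (phi x))) ->
  phi 0 = RtoC 1 -> phi 1 = RtoC 1 -> ell1 (fhat phi) -> has_sumZ (fhat phi) (RtoC 1).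
Proof.
  intros Hc H0 H1 Hl1. destruct (ell1_has_sumZ _ Hl1) as [L HL].
  replace (RtoC 1) with L; [exact HL|].
  rewrite (fourier_sum_at_0 (per phi) L).
  - unfold per. rewrite fp_R0. exact H0.
  - apply continuous_per; [exact Hc|congruence].
  - apply per_periodic.
  - apply (has_sumZ_ext (fhat phi)); [|exact HL]. intros l. symmetry. apply fhat_per.
Qed.

Lemma mu_window N phi k : mu N phi k = zsum (k - Z.of_nat N + 1) (2 * N) (fhat phi).
Proof. unfold mu. rewrite zsum_reflect. f_equal. lia. Qed.

Lemma partZ_nu N phi k n : (Z.abs k + Z.of_nat N <= Z.of_nat n)%Z ->
  partZ (fun l => if inBb N (k - l) then RtoC 0 else fhat phi l) n = (partZ (fhat phi) n - mu N phi k)%C.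
Proof.
  intros Hn. unfold partZ.
  rewrite (zsum_ext _ _ _ (fun l => fhat phi l - if inBb N (k - l) then fhat phi l else RtoC 0)%C)
    by (intros l _; destruct inBb; ring).
  rewrite zsum_minus, mu_window. f_equal.
  assert (HinB : forall l, inBb N (k - l) = true <-> (k - Z.of_nat N + 1 <= l < k - Z.of_nat N + 1 + Z.of_nat (2 * N))%Z).
  { intros l. unfold inBb. rewrite Bool.andb_true_iff, Z.leb_le, Z.ltb_lt. lia. }
  rewrite (zsum_support _ _ (k - Z.of_nat N + 1) (2 * N)); [|lia|lia|].
  - apply zsum_ext. intros l Hl. destruct (inBb N (k - l)) eqn:E; [reflexivity|].
    apply HinB in Hl. congruence.
  - intros l _ Hl. destruct (inBb N (k - l)) eqn:E; [|reflexivity].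
    apply HinB in E. contradiction.
Qed.

Lemma nu_eq N phi k L : has_sumZ (fhat phi) L -> nu N phi k = (L - mu N phi k)%C.
Proof.
  intros [H1 H2]. unfold nu. apply sumZ_unique.
  assert (Hev : eventually (fun n => partZ (fun l => if inBb N (k - l) then RtoC 0 else fhat phi l) n
                                     = (partZ (fhat phi) n - mu N phi k)%C)).
  { exists (Z.to_nat (Z.abs k + Z.of_nat N)). intros n Hn. apply partZ_nu. lia. }
  split; eapply is_lim_seq_ext_loc;
    [| apply (is_lim_seq_minus' _ _ _ _ H1 (is_lim_seq_const (fst (mu N phi k))))
     | | apply (is_lim_seq_minus' _ _ _ _ H2 (is_lim_seq_const (snd (mu N phi k))))];
    revert Hev; apply filter_imp; intros n ->; reflexivity.
Qed.

(** * Fourier coefficients of the reconstruction *)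

Lemma continuous_sN N x : continuous (sN N) x.
Proof.
  apply continuous_Cmult; [apply continuous_const|].
  apply continuous_zsum. intros b. apply continuous_cexp2pi.
Qed.

Lemma sN_periodic N x : sN N (x + 1) = sN N x.
Proof.
  unfold sN. f_equal. apply zsum_ext. intros b _.
  rewrite Rmult_plus_distr_l, Rmult_1_r. apply cexp2pi_periodic.
Qed.

Lemma fhat_sN_mult_per N phi k : (forall x, continuous (per phi) x) ->
  fhat (fun y => sN N y * per phi y)%C k = (RtoC (/ (2 * INR N)) * mu N phi k)%C.
Proof.
  intros Hc. unfold fhat.
  assert (Hterm : forall b x, continuous (fun y => per phi y * cexp2pi (- IZR (k - b) * y))%C x).
  { intros b x. apply continuous_Cmult; [apply Hc|apply continuous_cexp2pi]. }
  rewrite (CInt_ext _ (fun y => RtoC (/ (2 * INR N)) *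
             zsum (- Z.of_nat N) (2 * N) (fun b => per phi y * cexp2pi (- IZR (k - b) * y)))%C).
  - rewrite CInt_mult_l, CInt_zsum by (intros; try apply continuous_zsum; intros; apply Hterm).
    f_equal. apply zsum_ext. intros b _. apply fhat_per.
  - intros y. unfold sN. rewrite <- Cmult_assoc, <- Cmult_assoc. f_equal.
    rewrite <- zsum_mult_r. apply zsum_ext. intros b _.
    replace (- IZR (k - b) * y) with (IZR b * y + - IZR k * y) by (rewrite minus_IZR; ring).
    rewrite cexp2pi_add. ring.
Qed.

(* Each sample contributes a translate of the same kernel s_N * phi, whose coefficient is mu / 2N. *)
Lemma fhat_Rphi N phi (f : R -> C) k : (forall x, continuous (per phi) x) ->
  fhat (Rphi N phi f) k = (RtoC (/ (2 * INR N)) * mu N phi k *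
     zsum 0 (2 * N) (fun j => f (IZR j / (2 * INR N))%R * cexp2pi (- IZR k * (IZR j / (2 * INR N)))))%C.
Proof.
  intros Hc.
  set (t := fun j : Z => IZR j / (2 * INR N)).
  set (G := fun y => (sN N y * per phi y * cexp2pi (- IZR k * y))%C).
  assert (HG : forall x, continuous G x).
  { intros x. apply continuous_Cmult; [apply continuous_Cmult|apply continuous_cexp2pi].
    - apply continuous_sN.
    - apply Hc. }
  assert (HGper : forall x, G (x + 1) = G x).
  { intros x. unfold G. rewrite sN_periodic, per_periodic.
    replace (- IZR k * (x + 1)) with (- IZR k * x + IZR (- k)) by (rewrite opp_IZR; ring).
    rewrite cexp2pi_periodic. reflexivity. }
  assert (HGt : forall j x, continuous (fun y => G (y - t j)) x).
  { intros j x. apply continuous_comp_derivable; [auto_derive; exact I|apply HG]. }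
  unfold fhat.
  rewrite (CInt_ext _ (fun x => zsum 0 (2 * N) (fun j => f (t j) * cexp2pi (- IZR k * t j) * G (x - t j)%R)))%C.
  - rewrite CInt_zsum, (Cmult_comm _ (zsum _ _ _)), <- zsum_mult_r.
    + apply zsum_ext. intros j _. rewrite CInt_mult_l by apply HGt.
      rewrite CInt_translate by assumption. unfold G.
      rewrite <- (fhat_sN_mult_per N phi k Hc). reflexivity.
    + intros j x. apply continuous_Cmult; [apply continuous_const|apply HGt].
  - intros x. unfold Rphi. rewrite <- zsum_mult_r. apply zsum_ext. intros j _. cbv zeta. fold (t j).
    unfold G. replace (- IZR k * x) with (- IZR k * (x - t j) + - IZR k * t j) by ring.
    rewrite cexp2pi_add. ring.
Qed.

Lemma fhat_trig_poly (c : Z -> C) lo n k :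
  fhat (fun t => zsum lo n (fun b => c b * cexp2pi (IZR b * t)))%C k =
  zsum lo n (fun b => if Z.eq_dec b k then c b else RtoC 0).
Proof.
  unfold fhat.
  rewrite (CInt_ext _ (fun x => zsum lo n (fun b => c b * cexp2pi (IZR (b - k) * x))))%C.
  - rewrite CInt_zsum by (intros; apply continuous_Cmult; [apply continuous_const|apply continuous_cexp2pi]).
    apply zsum_ext. intros b _.
    rewrite CInt_mult_l, CInt_cexp2pi by apply continuous_cexp2pi.
    destruct (Z.eq_dec (b - k) 0), (Z.eq_dec b k); try lia; [apply Cmult_1_r|apply Cmult_0_r].
  - intros x. rewrite <- zsum_mult_r. apply zsum_ext. intros b _.
    rewrite <- Cmult_assoc, <- cexp2pi_add, minus_IZR. do 2 f_equal. ring.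
Qed.

Lemma bandlimited_repr (f : R -> C) mm : (forall x, continuous f x) -> (forall x, f (x + 1) = f x) ->
  (forall k, ~ inB mm k -> fhat f k = RtoC 0) ->
  forall t, f t = zsum (- Z.of_nat mm) (2 * mm) (fun b => fhat f b * cexp2pi (IZR b * t))%C.
Proof.
  intros Hc Hper Hband. apply fourier_coeff_inj; [exact Hc|exact Hper| | |].
  - intros x. apply continuous_zsum. intros b. apply continuous_Cmult; [apply continuous_const|apply continuous_cexp2pi].
  - intros x. apply zsum_ext. intros b _. rewrite Rmult_plus_distr_l, Rmult_1_r, cexp2pi_periodic. reflexivity.
  - intros k. rewrite fhat_trig_poly.
    destruct (Z_le_dec (- Z.of_nat mm) k); [destruct (Z_lt_dec k (Z.of_nat mm))|].
    + rewrite (zsum_single _ _ k); [| lia |].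
      * destruct Z.eq_dec; [reflexivity|lia].
      * intros b _ Hb. destruct Z.eq_dec; [lia|reflexivity].
    + rewrite Hband by (unfold inB; lia). symmetry. apply zsum_eq0. intros b Hb. destruct Z.eq_dec; [lia|reflexivity].
    + rewrite Hband by (unfold inB; lia). symmetry. apply zsum_eq0. intros b Hb. destruct Z.eq_dec; [lia|reflexivity].
Qed.

Definition alias_sum (N mm : nat) (a : Z -> C) (k : Z) : C :=
  zsum (- Z.of_nat mm) (2 * mm) (fun b =>
    if Z.eq_dec ((b - k) mod (2 * Z.of_nat N)) 0 then a b else RtoC 0).

Lemma sampled_sum (f : R -> C) mm N k : (0 < N)%nat ->
  (forall t, f t = zsum (- Z.of_nat mm) (2 * mm) (fun b => fhat f b * cexp2pi (IZR b * t))%C) ->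
  zsum 0 (2 * N) (fun j => f (IZR j / (2 * INR N))%R * cexp2pi (- IZR k * (IZR j / (2 * INR N))))%C =
  (RtoC (2 * INR N) * alias_sum N mm (fhat f) k)%C.
Proof.
  intros HN Hrepr. unfold alias_sum. rewrite <- zsum_mult_l.
  rewrite (zsum_ext _ _ _ (fun j => zsum (- Z.of_nat mm) (2 * mm) (fun b =>
             fhat f b * cexp2pi (IZR (b - k) * (IZR j / INR (2 * N))))))%C.
  - rewrite zsum_comm. apply zsum_ext. intros b _.
    rewrite zsum_mult_l, sum_roots_of_unity, mult_INR, Nat2Z.inj_mul by lia.
    change (Z.of_nat 2) with 2%Z. replace (INR 2) with 2 by (simpl; ring).
    destruct Z.eq_dec; ring.
  - intros j _. rewrite Hrepr, <- zsum_mult_r. apply zsum_ext. intros b _.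
    rewrite <- Cmult_assoc, <- cexp2pi_add, mult_INR, minus_IZR. replace (INR 2) with 2 by (simpl; ring).
    do 2 f_equal. ring.
Qed.

Lemma fhat_Rphi_bandlimited N mm phi (f : R -> C) k : (mm <= N)%nat ->
  (forall x, continuous (per phi) x) ->
  (forall x, continuous f x) -> (forall x, f (x + 1) = f x) ->
  (forall k, ~ inB mm k -> fhat f k = RtoC 0) ->
  fhat (Rphi N phi f) k = (mu N phi k * alias_sum N mm (fhat f) k)%C.
Proof.
  intros HmmN Hphi Hc Hper Hband.
  rewrite fhat_Rphi by exact Hphi.
  destruct N as [|N'].
  - assert (mm = 0%nat) by lia. subst mm. unfold alias_sum. change (2 * 0)%nat with 0%nat. rewrite !zsum_0. ring.
  - rewrite (sampled_sum f mm); [|lia|apply bandlimited_repr; assumption].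
    assert (HN : 2 * INR (S N') <> 0) by (pose proof (pos_INR N'); rewrite S_INR; lra).
    set (c := 2 * INR (S N')) in *.
    transitivity (RtoC (/ c * c) * (mu (S N') phi k * alias_sum (S N') mm (fhat f) k))%C;
      [rewrite RtoC_mult; ring|].
    rewrite Rinv_l by exact HN. ring.
Qed.

Lemma alias_unique mm N b b' : (mm <= N)%nat -> inB mm b -> inB mm b' ->
  (2 * Z.of_nat N | b - b')%Z -> b = b'.
Proof.
  intros HmmN Hb Hb' [q Hq]. unfold inB in *.
  assert (q = 0%Z) by nia. subst q. lia.
Qed.

Lemma alias_sum_single N mm a k b0 : (mm <= N)%nat -> inB mm b0 -> (2 * Z.of_nat N | b0 - k)%Z ->
  alias_sum N mm a k = a b0.
Proof.
  intros HmmN Hb0 Hdiv. assert (HN : (2 * Z.of_nat N <> 0)%Z) by (unfold inB in Hb0; lia).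
  unfold alias_sum. rewrite (zsum_single _ _ b0); [| unfold inB in Hb0; lia |].
  - destruct Z.eq_dec as [|Hmod]; [reflexivity|]. now apply Z.mod_divide in Hdiv.
  - intros b Hb Hne. destruct Z.eq_dec as [Hmod|]; [exfalso|reflexivity].
    apply Z.mod_divide in Hmod; [|exact HN].
    apply Hne, (alias_unique mm N); [exact HmmN|unfold inB; lia|exact Hb0|].
    replace (b - b0)%Z with ((b - k) - (b0 - k))%Z by ring. apply Z.divide_sub_r; assumption.
Qed.

Lemma alias_sum_eq0 N mm a k : (mm <= N)%nat -> ~ inB mm k ->
  (forall l, l <> 0%Z -> ~ inB mm (k - 2 * l * Z.of_nat N)) -> alias_sum N mm a k = RtoC 0.
Proof.
  intros HmmN Hk Hno. apply zsum_eq0. intros b Hb.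
  destruct Z.eq_dec as [Hmod|]; [exfalso|reflexivity].
  apply Z.mod_divide in Hmod; [|lia]. destruct Hmod as [q Hq].
  destruct (Z.eq_dec q 0) as [->|Hq0].
  - apply Hk. replace k with b by lia. unfold inB. lia.
  - apply (Hno (- q)%Z); [lia|]. replace (k - 2 * - q * Z.of_nat N)%Z with b by lia. unfold inB. lia.
Qed.

Lemma alias_notinB mm N k l : (mm <= N)%nat -> l <> 0%Z -> inB mm (k - 2 * l * Z.of_nat N) -> ~ inB mm k.
Proof.
  intros HmmN Hl Hb0 Hk.
  assert (Heq : k = (k - 2 * l * Z.of_nat N)%Z).
  { apply (alias_unique mm N); [exact HmmN|exact Hk|exact Hb0|]. exists l. ring. }
  unfold inB in *. nia.
Qed.

Theorem lemma4p1 (phi : R -> C) (m mm N : nat) (f : nat -> R -> C)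
  (* phi : [0,1] -> C continuous *)
  (Hphi_cont : forall x, 0 <= x <= 1 ->
     filterlim phi (within (fun y => 0 <= y <= 1) (locally x)) (locally (phi x)))
  (Hphi0 : phi 0 = RtoC 1) (Hphi1 : phi 1 = RtoC 1)
  (Hphi_l1 : ell1 (fhat phi))
  (HN : (mm <= N)%nat)
  (* f = (f_0, ..., f_{m-1}) in L^2([0,1]; C^m), mm-Fourier bandlimited,
     identified with its continuous 1-periodic representative *)
  (Hf_cont : forall i, (i < m)%nat -> forall x, continuous (f i) x)
  (Hf_per : forall i, (i < m)%nat -> forall x, f i (x + 1) = f i x)
  (Hf_band : forall i, (i < m)%nat -> forall k, ~ inB mm k -> fhat (f i) k = RtoC 0) :
  forall i, (i < m)%nat -> forall k : Z,
    let d := Cminus (fhat (f i) k) (fhat (Rphi N phi (f i)) k) in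
    (inB mm k -> d = Cmult (fhat (f i) k) (nu N phi k)) /\
    (forall l : Z, l <> 0%Z -> inB mm (k - 2 * l * Z.of_nat N)%Z ->
        d = Copp (Cmult (fhat (f i) (k - 2 * l * Z.of_nat N)%Z) (mu N phi k))) /\
    (~ inB mm k -> (forall l : Z, l <> 0%Z -> ~ inB mm (k - 2 * l * Z.of_nat N)%Z) ->
        d = RtoC 0).
Proof.
  intros i Hi k d.
  assert (Hd : d = (fhat (f i) k - mu N phi k * alias_sum N mm (fhat (f i)) k)%C).
  { unfold d. rewrite (fhat_Rphi_bandlimited N mm); auto.
    apply continuous_per; [exact Hphi_cont|congruence]. }
  split; [|split].
  - intros Hk. rewrite Hd, (alias_sum_single N mm _ k k HN Hk) by (rewrite Z.sub_diag; apply Z.divide_0_r).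
    rewrite (nu_eq N phi k 1 (has_sumZ_fhat_phi phi Hphi_cont Hphi0 Hphi1 Hphi_l1)). ring.
  - intros l Hl Hb0.
    rewrite Hd, (Hf_band i Hi k (alias_notinB mm N k l HN Hl Hb0)).
    rewrite (alias_sum_single N mm _ k _ HN Hb0) by (exists (- l)%Z; ring). ring.
  - intros Hk Hno. rewrite Hd, (Hf_band i Hi k Hk), alias_sum_eq0 by assumption. ring.
Qed.
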